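(* For every graph $G$ with $n$ vertices and $\mu$ maximal cliques, $$\frac{\mu}{2n}-1\le b_H(G)\le \mu-1.$$
   Context: A grid is the set of integer points of the plane; a grid edge joins two grid points at distance $1$. A path in the grid is a sequence of distinct grid edges in which consecutive edges share exactly one grid point and non-consecutive edges share none; a bend is a pair of consecutive edges of the path with different directions (horizontal/vertical). An EPG representation of a graph $G$ is a family $(P_v)_{v\in V(G)}$ of grid paths such that distinct $u,v$ are adjacent iff $P_u,P_v$ share a grid edge; it is a $B_k$-EPG representation if every path has at most $k$ bends. It is Helly if every subfamily of pairwise edge-intersecting paths has a grid edge common to all its members. The Helly-bend number $b_H(G)$ is the smallest $k$ such that $G$ admits a Helly $B_k$-EPG representation. *)

From HB Require Import structures.
From mathcomp Require Import all_boot all_order all_algebra.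
Set Implicit Arguments. Unset Strict Implicit. Unset Printing Implicit Defensive.
Import Order.TTheory GRing.Theory Num.Theory.
Local Open Scope ring_scope.

Definition gpoint := (int * int)%type.

(** Grid edges, in canonical form: ((x,y), true) is the horizontal edge
    joining (x,y) and (x+1,y); ((x,y), false) is the vertical edge joining
    (x,y) and (x,y+1). Every grid edge (pair of grid points at distance 1)
    has exactly one such representation, so equality of [gedge]s is equality
    of grid edges. *)
Definition gedge := (gpoint * bool)%type.

Definition edge_ends (g : gedge) : seq gpoint :=
  let: ((x, y), h) := g in [:: (x, y); if h then (x + 1, y) else (x, y + 1)].

Definition nshared (g f : gedge) : nat := count (mem (edge_ends f)) (edge_ends g).

Definition grid_path (P : seq gedge) : Prop :=
  [/\ P != [::], uniq P &
      forall i j : nat, (i < j < size P)%N ->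
        if j == i.+1 then nshared (nth (0, 0, true) P i) (nth (0, 0, true) P j) = 1%N
        else nshared (nth (0, 0, true) P i) (nth (0, 0, true) P j) = 0%N].

Definition bends (P : seq gedge) : nat :=
  count (fun pr : gedge * gedge => pr.1.2 != pr.2.2) (zip P (behead P)).

Definition EPG_rep (T : finType) (adj : rel T) (Pf : T -> seq gedge) : Prop :=
  (forall v, grid_path (Pf v)) /\
  (forall u v, u != v -> (adj u v <-> has (mem (Pf v)) (Pf u))).

Definition Helly (T : finType) (Pf : T -> seq gedge) : Prop :=
  forall S : {set T},
    (forall u v, u \in S -> v \in S -> has (mem (Pf v)) (Pf u)) ->
    exists g : gedge, forall v, v \in S -> g \in Pf v.

Definition Helly_Bk_EPG (T : finType) (adj : rel T) (k : nat) : Prop :=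
  exists Pf : T -> seq gedge,
    [/\ EPG_rep adj Pf, Helly Pf & forall v, (bends (Pf v) <= k)%N].

Definition is_helly_bend_number (T : finType) (adj : rel T) (b : nat) : Prop :=
  Helly_Bk_EPG adj b /\ forall k, Helly_Bk_EPG adj k -> (b <= k)%N.

Definition is_clique (T : finType) (adj : rel T) (S : {set T}) : bool :=
  [forall u in S, forall v in S, (u != v) ==> adj u v].

Definition is_maximal_clique (T : finType) (adj : rel T) (S : {set T}) : bool :=
  is_clique adj S && [forall S' : {set T}, (S \subset S') && is_clique adj S' ==> (S' == S)].

Definition num_max_cliques (T : finType) (adj : rel T) : nat :=
  #|[set S : {set T} | is_maximal_clique adj S]|.

From HB Require Import structures.
From mathcomp Require Import all_boot all_order all_algebra zify.
From Stdlib Require Import Classical Wf_nat.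
Import GRing.Theory Num.Theory.
Set Implicit Arguments. Unset Strict Implicit. Unset Printing Implicit Defensive.

(* Lower bound: in a Helly representation the paths of a maximal clique Q share
   an edge; sliding it along its direction until it leaves some path P_w yields
   an edge common to Q that is the first or last edge of a straight piece of
   P_w, and by maximality Q is exactly the set of vertices whose paths contain
   it.  A path with k bends has at most 2k + 2 such edges, hence
   mu <= n (2k + 2).
   Upper bound: list the maximal cliques Q_1, ..., Q_mu and give each vertex v
   a staircase of mu segments, the j-th one on the line j (n + 1) if v is in
   Q_j and on a line of its own just above it otherwise.  Two paths then share
   an edge only on a common line, i.e. inside a common maximal clique, and all
   paths of Q_j pass through the edge leaving the diagonal point
   (j (n + 1), j (n + 1)).  The staircase has mu - 1 bends. *)

Definition gstart (g : gedge) : gpoint := g.1.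
Definition gend (g : gedge) : gpoint :=
  let: ((x, y), h) := g in if h then (x + 1, y)%R else (x, y + 1)%R.
Definition coord_sum (p : gpoint) : int := (p.1 + p.2)%R.

Lemma coord_sum_gend g : coord_sum (gend g) = (coord_sum (gstart g) + 1)%R.
Proof. by case: g => [[x y] []]; rewrite /coord_sum /=; lia. Qed.

Lemma nshared_linked g f : gstart f = gend g -> nshared g f = 1.
Proof.
case: g f => [[x y] h] [[x' y'] h'] /=; rewrite /nshared /= !inE.
by case: h; case: h' => -[-> ->] /=; rewrite !xpair_eqE; lia.
Qed.

Lemma nshared_far g f :
  (coord_sum (gstart g) + 1 < coord_sum (gstart f))%R -> nshared g f = 0.
Proof.
case: g f => [[x y] h] [[x' y'] h']; rewrite /coord_sum /nshared /= !inE.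
by case: h; case: h' => /=; rewrite !xpair_eqE; lia.
Qed.

Definition linked (g f : gedge) : bool := gstart f == gend g.

Definition edge0 : gedge := (0, 0, true)%R.

Lemma grid_path_of_chain x P : P != [::] -> path linked x P -> grid_path P.
Proof.
move=> P0 /path_sorted /(sortedP edge0) chain.
pose s t := coord_sum (gstart (nth edge0 P t)).
have sE t : t < size P -> s t = (s 0%N + t%:Z)%R.
  elim: t => [|t IH] lt; first by rewrite addr0.
  by rewrite /s (eqP (chain t lt)) coord_sum_gend -/(s t) IH ?(ltnW lt) // -/(s 0%N); lia.
split=> // [|i j /andP [ij jP]].
  apply/(uniqP edge0) => i j iP jP eq_ij.
  by have := sE i iP; rewrite /s eq_ij -/(s j) sE // => /addrI [].
have iP := ltn_trans ij jP.
case: eqP => [ji | /eqP ji].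
  by subst j; rewrite nshared_linked // (eqP (chain i jP)).
by apply: nshared_far; rewrite -/(s i) -/(s j) sE // (sE j) //; lia.
Qed.

Definition gsucc (g : gedge) : gedge := (gend g, g.2).

Lemma gsucc_inj : injective gsucc.
Proof.
case=> [[x y] h] [[x' y'] h']; rewrite /gsucc /=.
by case: h; case: h' => //= -[] E1 E2; congr (_, _, _); lia.
Qed.

Lemma coord_sum_iter_gsucc n g :
  coord_sum (gstart (iter n gsucc g)) = (coord_sum (gstart g) + n%:Z)%R.
Proof.
elim: n => [|n IH]; first by rewrite addr0.
by rewrite iterS [gstart _]/= coord_sum_gend IH -addrA -addn1 PoszD.
Qed.

Lemma exists_iter_gsucc_notin (P : seq gedge) g : exists n, iter n gsucc g \notin P.
Proof.
have iter_inj : injective (fun n => iter n gsucc g).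
  move=> n n' /(congr1 (coord_sum \o gstart)) /=.
  by rewrite !coord_sum_iter_gsucc => /addrI [].
set s := [seq iter n gsucc g | n <- iota 0 (size P).+1].
have s_uniq : uniq s by rewrite map_inj_uniq ?iota_uniq.
have /allPn [_ /mapP [n _ ->] nP] : ~~ all [in P] s.
  apply/negP => /allP sP; have := uniq_leq_size s_uniq sP.
  by rewrite size_map size_iota ltnn.
by exists n.
Qed.

Lemma nshared1_gsucc g f : g.2 = f.2 -> nshared g f = 1 -> f = gsucc g \/ g = gsucc f.
Proof.
case: g f => [[x y] h] [[x' y'] h'] /= <-; rewrite /nshared /gsucc /= !inE.
case: h; rewrite !xpair_eqE => shared.
  have [[-> ->]|[-> ->]] : (x' = x + 1 /\ y' = y \/ x = x' + 1 /\ y = y')%R by lia.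
  by left. by right.
have [[-> ->]|[-> ->]] : (x' = x /\ y' = y + 1 \/ x = x' /\ y = y' + 1)%R by lia.
by left. by right.
Qed.

Definition bend_at (P : seq gedge) j :=
  (j.+1 < size P) && ((nth edge0 P j).2 != (nth edge0 P j.+1).2).

Definition seg_end (P : seq gedge) i :=
  [|| i == 0, i.+1 == size P, (0 < i) && bend_at P i.-1 | bend_at P i].

Lemma gsucc_notin_seg_end P i :
  grid_path P -> i < size P -> gsucc (nth edge0 P i) \notin P -> seg_end P i.
Proof.
case=> _ P_uniq P_shared iP; apply: contraR; rewrite /seg_end !negb_or.
case: i iP => // k kP /and4P [_ kP' bend1 bend2].
have k2P : k.+2 < size P by rewrite ltn_neqAle kP' kP.
have k1P := ltn_trans (ltnSn k.+1) k2P.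
rewrite /= /bend_at k1P negbK in bend1; rewrite /bend_at k2P negbK in bend2.
have := P_shared k k.+1; rewrite leqnn k1P eqxx => /(_ isT) shared1.
have := P_shared k.+1 k.+2; rewrite leqnn k2P eqxx => /(_ isT) shared2.
have [next1|<-] := nshared1_gsucc (eqP bend1) shared1; last exact: mem_nth (ltnW kP).
have [<-|prev2] := nshared1_gsucc (eqP bend2) shared2; first exact: mem_nth k2P.
move: prev2; rewrite next1 => /gsucc_inj eq_k.
by have := (uniqP edge0 P_uniq) k k.+2 (ltnW kP) k2P eq_k; lia.
Qed.

Lemma bends_cons2 e f P : bends [:: e, f & P] = (e.2 != f.2) + bends (f :: P).
Proof. by []. Qed.

Lemma count_bend_at P n : count (bend_at P) (iota 0 n) <= bends P.
Proof.
elim: P n => [|e P IH] [|n] //=; first by rewrite count_pred0.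
rewrite (iotaDl 1 0) count_map (eq_count (a2 := bend_at P)) //.
have := IH n; case: P {IH} => [|f P] IHn; first exact: IHn.
by rewrite bends_cons2 leq_add.
Qed.

Lemma count_seg_end P : count (seg_end P) (iota 0 (size P)) <= 2 + 2 * bends P.
Proof.
set s := iota 0 (size P).
have or_le (a b : pred nat) : count (fun i => a i || b i) s <= count a s + count b s.
  by rewrite -count_predUI leq_addr.
have first_le : count (pred1 0) s <= 1 by rewrite count_uniq_mem ?iota_uniq ?leq_b1.
have last_le : count (fun i => i.+1 == size P) s <= 1.
  have -> : count (fun i => i.+1 == size P) s = count (pred1 (size P)) (map succn s).
    by rewrite count_map.
  by rewrite count_uniq_mem ?leq_b1 // (map_inj_uniq succn_inj) iota_uniq.
have after_bend : count (fun i => (0 < i) && bend_at P i.-1) s <= bends P.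
  rewrite /s; case: (size P) => [|n] //=.
  by rewrite (iotaDl 1 0) count_map; apply: count_bend_at.
rewrite (_ : 2 + 2 * bends P = 1 + (1 + (bends P + bends P))); last by lia.
apply: leq_trans (or_le _ _) _; apply: leq_add => //.
apply: leq_trans (or_le _ _) _; apply: leq_add => //.
apply: leq_trans (or_le _ _) _; apply: leq_add => //.
exact: count_bend_at.
Qed.

Section Cliques.
Variables (T : finType) (adj : rel T).

Lemma cliqueP (S : {set T}) :
  reflect (forall u v, u \in S -> v \in S -> u != v -> adj u v) (is_clique adj S).
Proof.
apply: (iffP forall_inP) => [S_clique u v uS vS | S_clique u uS].
  by move/forall_inP/(_ v vS)/implyP: (S_clique u uS).
by apply/forall_inP => v vS; apply/implyP; apply: S_clique.
Qed.

Lemma maximal_cliqueP (S : {set T}) :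
  reflect (is_clique adj S /\
           forall S' : {set T}, S \subset S' -> is_clique adj S' -> S' = S)
          (is_maximal_clique adj S).
Proof.
apply: (iffP andP) => -[S_clique S_max]; split=> //.
  move=> S' sub S'_clique; apply/eqP.
  by move/forallP/(_ S')/implyP: S_max; apply; apply/andP.
by apply/forallP => S'; apply/implyP => /andP [sub /(S_max _ sub) ->].
Qed.

Lemma clique_sub_maximal (S : {set T}) :
  is_clique adj S -> exists2 Q, is_maximal_clique adj Q & S \subset Q.
Proof.
move=> S_clique.
have [Q /andP [Q_clique SQ] Q_max] :=
  @arg_maxnP _ S (fun Q => is_clique adj Q && (S \subset Q)) (fun Q => #|Q|)
             (introT andP (conj S_clique (subxx S))).
exists Q => //; apply/maximal_cliqueP; split=> // S' QS' S'_clique.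
apply/eqP; rewrite eq_sym eqEcard QS'.
by apply: Q_max; rewrite S'_clique (subset_trans SQ QS').
Qed.

Lemma maximal_clique_neq0 (Q : {set T}) : 0 < #|T| -> is_maximal_clique adj Q -> Q != set0.
Proof.
case/card_gt0P => t _ /maximal_cliqueP [_ Q_max]; apply/negP => /eqP Q0.
have t_clique : is_clique adj [set t].
  by apply/cliqueP => u v /set1P -> /set1P ->; rewrite eqxx.
have Q_sub : Q \subset [set t] by rewrite Q0 sub0set.
by have /setP/(_ t) := Q_max _ Q_sub t_clique; rewrite Q0 !inE eqxx.
Qed.

End Cliques.

Lemma last_common_iterate (I : finType) (A : eqType) (F : I -> seq A) (f : A -> A)
    (Q : {set I}) e w0 n0 :
  (forall v, v \in Q -> e \in F v) -> w0 \in Q -> iter n0 f e \notin F w0 ->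
  exists n, exists2 w, w \in Q &
    (forall v, v \in Q -> iter n f e \in F v) /\ f (iter n f e) \notin F w.
Proof.
move=> eQ w0Q out0.
have exP : exists n, [exists w in Q, iter n f e \notin F w].
  by exists n0; apply/exists_inP; exists w0.
case: (ex_minnP exP) => -[|n] /exists_inP [w wQ out] n_min; first by rewrite eQ in out.
exists n, w => //; split=> // v vQ; apply/negPn/negP => out_v.
have : [exists w in Q, iter n f e \notin F w] by apply/exists_inP; exists v.
by move/n_min; rewrite ltnn.
Qed.

Section LowerBound.
Variables (T : finType) (adj : rel T) (Pf : T -> seq gedge).
Hypotheses (Pf_rep : EPG_rep adj Pf) (Pf_Helly : Helly Pf).

Lemma maximal_clique_edge_set Q e :
  is_maximal_clique adj Q -> (forall v, v \in Q -> e \in Pf v) ->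
  Q = [set v | e \in Pf v].
Proof.
case: Pf_rep => _ rep /maximal_cliqueP [_ Q_max] eQ; symmetry; apply: Q_max.
  by apply/subsetP => v vQ; rewrite inE eQ.
by apply/cliqueP => u v; rewrite !inE => eu ev uv; apply/(rep u v uv)/hasP; exists e.
Qed.

Lemma clique_common_edge S :
  is_clique adj S -> exists e, forall v, v \in S -> e \in Pf v.
Proof.
case: Pf_rep => paths rep /cliqueP S_clique; apply: Pf_Helly => u v uS vS.
have [<-|uv] := eqVneq u v; last by apply/(rep u v uv); apply: S_clique.
by case: (paths u) => + _ _; case: (Pf u) => // e P _; rewrite /= inE eqxx.
Qed.

Lemma maximal_clique_seg_end Q :
  is_maximal_clique adj Q -> Q != set0 ->
  exists w i, [/\ w \in Q, i < size (Pf w), seg_end (Pf w) i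
                & Q = [set v | nth edge0 (Pf w) i \in Pf v]].
Proof.
move=> Q_max /set0Pn [w0 w0Q].
have [e eQ] := clique_common_edge (proj1 (maximal_cliqueP _ _ Q_max)).
have [n0 out0] := exists_iter_gsucc_notin (Pf w0) e.
have [n [w wQ [enQ out]]] := last_common_iterate eQ w0Q out0.
have enw := enQ w wQ.
exists w, (index (iter n gsucc e) (Pf w)); rewrite index_mem nth_index //; split=> //.
  by apply: gsucc_notin_seg_end; rewrite ?index_mem ?nth_index //; case: Pf_rep.
exact: maximal_clique_edge_set.
Qed.

End LowerBound.

Lemma num_max_cliques_le (T : finType) (adj : rel T) k :
  0 < #|T| -> Helly_Bk_EPG adj k -> num_max_cliques adj <= #|T| * (2 + 2 * k).
Proof.
move=> T0 [Pf [rep helly bends_k]].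
pose ends w := [seq i <- iota 0 (size (Pf w)) | seg_end (Pf w) i].
pose clique_at (p : T * nat) := [set v | nth edge0 (Pf p.1) p.2 \in Pf v].
pose L := [seq (w, i) | w <- enum T, i <- ends w].
have sub : [set S | is_maximal_clique adj S] \subset [seq clique_at p | p <- L].
  apply/subsetP => Q; rewrite inE => Q_max.
  have [w [i [wQ iP i_end ->]]] :=
    maximal_clique_seg_end rep helly Q_max (maximal_clique_neq0 T0 Q_max).
  apply/mapP; exists (w, i) => //; apply/allpairsPdep; exists w, i.
  by rewrite mem_enum mem_filter mem_iota i_end.
apply: leq_trans (subset_leq_card sub) _; apply: leq_trans (card_size _) _.
rewrite size_map size_allpairs_dep sumnE big_map big_enum -sum_nat_const.
apply: leq_sum => w _; rewrite size_filter; apply: leq_trans (count_seg_end _) _.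
by rewrite leq_add2l leq_mul2l bends_k orbT.
Qed.

Definition orient (h : bool) (a b : nat) : gpoint :=
  if h then (Posz a, Posz b) else (Posz b, Posz a).

Definition segment (h : bool) (a L b : nat) : seq gedge :=
  [seq (orient h i b, h) | i <- iota a L].

Lemma orient_negb h a b : orient (~~ h) b a = orient h a b.
Proof. by case: h. Qed.

Lemma orient_edge_inj h h' i i' b b' :
  (orient h i b, h) = (orient h' i' b', h') -> [/\ h = h', i = i' & b = b'].
Proof. by rewrite /orient; case: h h' => -[] //= [-> ->]. Qed.

Lemma gend_orient h i b : gend (orient h i b, h) = orient h i.+1 b.
Proof. by case: h; rewrite /gend /= -addn1 PoszD. Qed.

Lemma path_segment x h a L b : gend x = orient h a b ->
  path linked x (segment h a L b) /\ gend (last x (segment h a L b)) = orient h (a + L) b.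
Proof.
elim: L a x => [|L IH] a x xa; first by rewrite addn0.
have [pth lst] := IH a.+1 (orient h a b, h) (gend_orient h a b).
by rewrite /segment /= -/(segment h a.+1 L b) /linked xa eqxx pth lst addSnnS.
Qed.

Lemma bends_const_dir h (P : seq gedge) : all (fun e => e.2 == h) P -> bends P = 0.
Proof.
elim: P => [|e [|f P] IH] // /andP [/eqP eh /[dup] fP /andP [/eqP fh _]].
by rewrite bends_cons2 IH // eh fh eqxx.
Qed.

Lemma bends_cat P1 P2 : bends (P1 ++ P2) <= bends P1 + 1 + bends P2.
Proof.
elim: P1 => [|e [|f P1] IH]; first by rewrite addnC leq_addr.
  by case: P2 {IH} => [|f P2] //; rewrite bends_cons2 leq_add2r; apply: leq_b1.
by rewrite !bends_cons2 -!addnA leq_add2l addnA; apply: IH.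
Qed.

Lemma bends_flatten (Ps : seq (seq gedge)) :
  all (fun P => bends P == 0) Ps -> bends (flatten Ps) <= (size Ps).-1.
Proof.
elim: Ps => [|P [|P' Ps] IH] //= /andP [/eqP P0 Ps0]; first by rewrite cats0 P0.
by apply: leq_trans (bends_cat _ _) _; rewrite P0 add0n add1n ltnS IH.
Qed.

Definition staircase (l : nat -> nat) (m : nat) : seq gedge :=
  flatten [seq segment (odd j) (l j.-1) (l j.+1 - l j.-1) (l j) | j <- iota 1 m].

Lemma bends_staircase l m : bends (staircase l m) <= m.-1.
Proof.
apply: leq_trans (bends_flatten _) _; last by rewrite size_map size_iota.
apply/allP => P /mapP [j _ ->]; rewrite (bends_const_dir (h := odd j)) //.
by rewrite all_map; apply/allP => i _ /=.
Qed.

Lemma mem_staircase l m j i : 0 < j <= m -> l j.-1 <= i < l j.+1 ->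
  (orient (odd j) i (l j), odd j) \in staircase l m.
Proof.
move=> jm ij; apply/flattenP; exists (segment (odd j) (l j.-1) (l j.+1 - l j.-1) (l j)).
  by apply/mapP; exists j; rewrite // mem_iota add1n ltnS.
by apply/mapP; exists i; rewrite // mem_iota subnKC //; lia.
Qed.

Lemma staircase_edgeP l m g : g \in staircase l m ->
  exists2 j, 0 < j <= m & exists i, g = (orient (odd j) i (l j), odd j).
Proof.
case/flattenP => P /mapP [j]; rewrite mem_iota add1n ltnS => jm ->.
by case/mapP => i _ ->; exists j => //; exists i.
Qed.

Lemma staircase_grid_path l m :
  0 < m -> (forall j, 0 < j <= m -> l j.-1 < l j.+1) -> grid_path (staircase l m).
Proof.
move=> m0 l_mono.
have chain a k x : 0 < a -> a + k <= m.+1 -> gend x = orient (odd a) (l a.-1) (l a) ->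
    path linked x (flatten [seq segment (odd j) (l j.-1) (l j.+1 - l j.-1) (l j)
                           | j <- iota a k]).
  elim: k a x => [|k IH] a x a0 akm xa //=.
  have [pth lst] := path_segment (l a.+1 - l a.-1) xa.
  rewrite cat_path pth /=; apply: IH => //; first by rewrite addSnnS.
  by rewrite lst subnKC ?(ltnW (l_mono a _)) //= ?orient_negb //; lia.
pose x0 : gedge := ((Posz (l 0) - 1)%R, Posz (l 1), true).
apply: (@grid_path_of_chain x0); last by apply: chain; rewrite //= /x0 /gend /= subrK.
have first_edge : (orient (odd 1) (l 0) (l 1), odd 1) \in staircase l m.
  by apply: mem_staircase => //; rewrite leqnn; apply: (l_mono 1).
by case: (staircase l m) first_edge.
Qed.

Section StaircaseRepresentation.
Variables (T : finType) (adj : rel T).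
Hypothesis adj_sym : symmetric adj.

Definition max_cliques := enum [set S : {set T} | is_maximal_clique adj S].

Definition band := #|T|.+1.

Definition offset (v : T) j :=
  if v \in nth set0 max_cliques j.-1 then 0 else (enum_rank v).+1.

(* Segment [j] (for [0 < j <= size max_cliques]) of the path of [v] lies on
   the line at [level v j]: the shared line [j * band] if [v] is in the [j]-th
   maximal clique [nth set0 max_cliques j.-1], and a line private to [v] in the
   same band otherwise. *)
Definition level v j := j * band + offset v j.

Definition staircase_rep v := staircase (level v) (size max_cliques).

Lemma offset_lt v j : offset v j < band.
Proof. by rewrite /offset; case: ifP => // _; rewrite ltnS; apply: ltn_ord. Qed.

Lemma level_inj u v j j' :
  level u j = level v j' -> j = j' /\ offset u j = offset v j'.
Proof.
move=> eq_level.
have divK w i : level w i %/ band = i by rewrite divnMDl // divn_small ?offset_lt ?addn0.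
have modK w i : level w i %% band = offset w i by rewrite modnMDl modn_small ?offset_lt.
by split; [rewrite -(divK u j) -(divK v j') | rewrite -modK -modK]; rewrite eq_level.
Qed.

Lemma level_lt v j : 0 < j -> level v j.-1 < level v j.+1.
Proof. by case: j => // j _; have := offset_lt v j; rewrite /level /= !mulSn; lia. Qed.

Lemma staircase_rep_adj u v :
  u != v -> has [in staircase_rep v] (staircase_rep u) -> adj u v.
Proof.
move=> uv /hasP [g /staircase_edgeP [j jm [i ->]] /staircase_edgeP [j' _ [i' edge_eq]]].
case/orient_edge_inj: edge_eq => _ _ /level_inj [<-]; rewrite /offset.
set Q := nth set0 max_cliques j.-1.
have /maximal_cliqueP [/cliqueP Q_clique _] : is_maximal_clique adj Q.
  have : Q \in max_cliques by case: j jm @Q => // j /andP [_ /mem_nth].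
  by rewrite /max_cliques mem_enum inE.
case: ifP => uQ; case: ifP => vQ //; first by move=> _; apply: Q_clique.
by case=> /ord_inj/enum_rank_inj eq_uv; rewrite eq_uv eqxx in uv.
Qed.

Lemma staircase_rep_clique_edge S :
  is_clique adj S -> exists g, forall w, w \in S -> g \in staircase_rep w.
Proof.
case/clique_sub_maximal => Q Q_max SQ.
have /(nthP set0) [k kP Qk] : Q \in max_cliques by rewrite mem_enum inE.
exists (orient (odd k.+1) (k.+1 * band) (k.+1 * band), odd k.+1) => w /(subsetP SQ) wQ.
have lvl : level w k.+1 = k.+1 * band by rewrite /level /offset /= Qk wQ addn0.
have := @mem_staircase (level w) (size max_cliques) k.+1 (k.+1 * band).
rewrite lvl /=; apply=> //.
by have := offset_lt w k; rewrite /level !mulSn; lia.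
Qed.

Lemma max_cliques_gt0 : 0 < size max_cliques.
Proof.
have [|Q Q_max _] := @clique_sub_maximal _ adj set0.
  by apply/cliqueP => u v; rewrite inE.
by rewrite /max_cliques -cardE; apply/card_gt0P; exists Q; rewrite inE.
Qed.

Lemma staircase_rep_Helly : Helly_Bk_EPG adj (size max_cliques).-1.
Proof.
exists staircase_rep; split; last by move=> v; apply: bends_staircase.
- split=> [v | u v uv].
    apply: staircase_grid_path => [|j /andP [j0 _]]; first exact: max_cliques_gt0.
    exact: level_lt.
  split=> [uv_adj | ]; last exact: staircase_rep_adj.
  have [|g g_common] := @staircase_rep_clique_edge [set u; v].
    apply/cliqueP => x y /set2P [] -> /set2P [] ->; rewrite ?eqxx // => _.
    by rewrite adj_sym.
  by apply/hasP; exists g; apply: g_common; rewrite !inE eqxx ?orbT.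
- move=> S S_pairwise; apply: staircase_rep_clique_edge; apply/cliqueP => u v uS vS uv.
  exact: staircase_rep_adj uv (S_pairwise u v uS vS).
Qed.

End StaircaseRepresentation.

Lemma exists_least_nat (P : nat -> Prop) k :
  P k -> exists b, P b /\ forall k', P k' -> b <= k'.
Proof.
move=> Pk; have [b [[Pb b_min] _]] :=
  dec_inh_nat_subset_has_unique_least_element P (fun n => classic (P n)) (ex_intro _ k Pk).
by exists b; split=> // k' /b_min /leP.
Qed.

Local Open Scope ring_scope.

Theorem theorem3p1 (T : finType) (adj : rel T)
  (adj_sym : symmetric adj) (adj_irr : irreflexive adj) (T_nonempty : (0 < #|T|)%N) :
  exists b : nat,
    [/\ is_helly_bend_number adj b,
        (num_max_cliques adj)%:Q / (2 * #|T|)%:Q - 1 <= b%:Q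
      & b%:Q <= (num_max_cliques adj)%:Q - 1].
Proof.
have mu_size : num_max_cliques adj = size (max_cliques adj).
  by rewrite /num_max_cliques cardE.
have mu_gt0 := max_cliques_gt0 adj.
have [b [b_rep b_min]] := exists_least_nat (staircase_rep_Helly adj_sym).
have upper : (b <= (size (max_cliques adj)).-1)%N := b_min _ (staircase_rep_Helly adj_sym).
have lower := num_max_cliques_le T_nonempty b_rep.
exists b; split=> //.
  by rewrite lerBlDr ler_pdivrMr ?ltr0n ?muln_gt0 // -[1]/(1%:R) -natrD -natrM ler_nat; lia.
by rewrite lerBrDr -[1]/(1%:R) -natrD ler_nat mu_size; lia.
Qed.
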